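(* If $q\ge 7$ is an integer, then the achromatic number of $K_6\square K_q$ is at most $2q+7$.
   Context: For a finite simple graph $G$ and a finite colour set $C$, a vertex colouring $f:V(G)\to C$ is complete if for any two distinct colours $c_1,c_2\in C$ there is an edge $v_1v_2\in E(G)$ with $f(v_i)=c_i$, $i=1,2$. The achromatic number of $G$ is the maximum number of colours in a proper complete vertex colouring of $G$. The Cartesian product $G_1\square G_2$ has vertex set $V(G_1)\times V(G_2)$, with $(u_1,u_2)$ adjacent to $(w_1,w_2)$ iff either $u_1w_1\in E(G_1)$ and $u_2=w_2$, or $u_2w_2\in E(G_2)$ and $u_1=w_1$. *)

From mathcomp Require Import all_boot.
Set Implicit Arguments. Unset Strict Implicit. Unset Printing Implicit Defensive.

Record sgraph := SGraph {
  vert : finType;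
  adj : rel vert;
  adj_sym : symmetric adj;
  adj_irrefl : irreflexive adj }.

Definition complete_graph (n : nat) : sgraph :=
  @SGraph 'I_n (fun x y => x != y)
    (fun x y => congr1 negb (eq_sym x y)) (fun x => negbF (eqxx x)).

Definition cart_adj (G H : sgraph) : rel (vert G * vert H) :=
  fun u w => (adj u.1 w.1 && (u.2 == w.2)) || (adj u.2 w.2 && (u.1 == w.1)).

Lemma cart_adj_sym G H : symmetric (@cart_adj G H).
Proof.
move=> [a b] [c d]; rewrite /cart_adj /= (adj_sym a c) (adj_sym b d).
by rewrite (eq_sym b d) (eq_sym a c).
Qed.

Lemma cart_adj_irrefl G H : irreflexive (@cart_adj G H).
Proof. by move=> [a b]; rewrite /cart_adj /= !adj_irrefl. Qed.

Definition cartesian (G H : sgraph) : sgraph :=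
  @SGraph (vert G * vert H)%type (@cart_adj G H) (@cart_adj_sym G H) (@cart_adj_irrefl G H).

Definition proper_col (G : sgraph) k (f : {ffun vert G -> 'I_k}) : bool :=
  [forall u, forall v, adj u v ==> (f u != f v)].

Definition complete_col (G : sgraph) k (f : {ffun vert G -> 'I_k}) : bool :=
  [forall c1 : 'I_k, forall c2 : 'I_k, (c1 != c2) ==>
     [exists u, exists v, [&& adj u v, f u == c1 & f v == c2]]].

(* achromatic number: maximum k admitting a proper complete colouring with k colours.
   (Any such k with k >= 2 uses every colour, so k <= #|V|; the max is over k <= #|V|.) *)
Definition achromatic (G : sgraph) : nat :=
  \max_(k < #|vert G|.+1 |
        [exists f : {ffun vert G -> 'I_k}, proper_col f && complete_col f]) k.

From mathcomp Require Import all_boot.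
From mathcomp Require Import zify.

Set Implicit Arguments.
Unset Strict Implicit.
Unset Printing Implicit Defensive.

(* In a proper complete colouring every other colour must occur in the
   neighbourhood of each colour class.  In the rook graph K_m □ K_n a vertex has
   m + n - 2 neighbours and two non-adjacent vertices have two common neighbours,
   so a class with at most two vertices sees at most 2(m + n) - 6 colours.  With
   k >= 2(m + n - 2) colours every class therefore has at least three vertices,
   whence 3k <= mn; for m = 6 this contradicts k >= 2q + 8. *)

Definition nbhd (G : sgraph) (x : vert G) : {set vert G} := [set y | adj x y].

Definition nbhd_set (G : sgraph) (A : {set vert G}) : {set vert G} :=
  \bigcup_(x in A) nbhd x.

Definition colour_class (G : sgraph) k (f : {ffun vert G -> 'I_k}) (c : 'I_k) :
  {set vert G} := [set x | f x == c].

Section Colourings.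

Variables (G : sgraph) (k : nat) (f : {ffun vert G -> 'I_k}).

Lemma card_nbhd_colour_class c :
  complete_col f -> k.-1 <= #|nbhd_set (colour_class f c)|.
Proof.
move=> /forallP complete_f.
have cover : [set~ c] \subset f @: nbhd_set (colour_class f c).
  apply/subsetP => c'; rewrite !inE => c'_neq_c.
  have /existsP[x /existsP[y /and3P[xy /eqP fx /eqP fy]]] :
      [exists x, exists y, [&& adj x y, f x == c & f y == c']].
    by apply: (implyP (forallP (complete_f c) c')); rewrite eq_sym.
  apply/imsetP; exists y => //; apply/bigcupP; exists x.
    by rewrite inE fx.
  by rewrite inE.
have := leq_trans (subset_leq_card cover) (leq_imset_card _ _).
by rewrite cardsC1 card_ord.
Qed.

Lemma proper_col_class_indep c :
  proper_col f -> {in colour_class f c &, forall x y, ~~ adj x y}.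
Proof.
move=> /forallP proper_f x y; rewrite !inE => /eqP fx /eqP fy.
apply/negP => /(implyP (forallP (proper_f x) y)).
by rewrite fx fy eqxx.
Qed.

Lemma sum_card_colour_class : \sum_(c < k) #|colour_class f c| = #|vert G|.
Proof.
rewrite -sum1_card (partition_big f predT) //=.
by apply: eq_bigr => c _; rewrite -sum1_card; apply: eq_bigl => x; rewrite inE.
Qed.

End Colourings.

Section BoundedDegree.

Variables (G : sgraph) (D : nat).
Hypothesis card_nbhd_le : forall x : vert G, #|nbhd x| <= D.
Hypothesis common_nbhd : forall x y : vert G,
  x != y -> ~~ adj x y -> 2 <= #|nbhd x :&: nbhd y|.
Hypothesis D_ge2 : 2 <= D.

Lemma card_nbhd_set_indep (A : {set vert G}) :
  #|A| <= 2 -> {in A &, forall x y, ~~ adj x y} -> #|nbhd_set A| <= 2 * D - 2.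
Proof.
move=> A_small.
have : #|A| \in [:: 0; 1; 2] by rewrite !inE; lia.
rewrite !inE => /or3P[/eqP/cards0_eq ->|/cards1P[x ->]|/cards2P[x [y [xy ->]]]] A_indep.
- by rewrite /nbhd_set big_set0 cards0.
- by rewrite /nbhd_set big_set1; have := card_nbhd_le x; lia.
rewrite /nbhd_set big_setU1 /= ?big_set1; last by rewrite inE.
have nadj_xy : ~~ adj x y by apply: A_indep; rewrite !inE eqxx ?orbT.
have := common_nbhd xy nadj_xy.
have := cardsU (nbhd x) (nbhd y); have := card_nbhd_le x; have := card_nbhd_le y.
lia.
Qed.

Lemma colour_class_card_ge3 k (f : {ffun vert G -> 'I_k}) c :
  proper_col f -> complete_col f -> 2 * D <= k -> 3 <= #|colour_class f c|.
Proof.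
move=> proper_f complete_f k_ge; rewrite leqNgt; apply/negP => small.
have := card_nbhd_set_indep small (proper_col_class_indep proper_f).
have := card_nbhd_colour_class c complete_f.
lia.
Qed.

Lemma proper_complete_col_lt k (f : {ffun vert G -> 'I_k}) :
  #|vert G| < 6 * D -> proper_col f -> complete_col f -> k < 2 * D.
Proof.
move=> small_G proper_f complete_f; rewrite ltnNge; apply/negP => k_ge.
have : \sum_(c < k) 3 <= #|vert G|.
  rewrite -(sum_card_colour_class f); apply: leq_sum => c _.
  exact: colour_class_card_ge3.
rewrite sum_nat_const card_ord; lia.
Qed.

Lemma achromatic_lt : #|vert G| < 6 * D -> achromatic G < 2 * D.
Proof.
move=> small_G; have D_gt0 : 0 < 2 * D by lia.
rewrite -(prednK D_gt0) ltnS; apply/bigmax_leqP => k /existsP[f /andP[pf cf]].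
by rewrite -ltnS prednK //; exact: proper_complete_col_lt pf cf.
Qed.

End BoundedDegree.

Lemma card_nbhd_cartesian (G H : sgraph) (x : vert (cartesian G H)) :
  #|nbhd x| <= #|nbhd x.1| + #|nbhd x.2|.
Proof.
have sub : nbhd x \subset
    [set (a, x.2) | a in nbhd x.1] :|: [set (x.1, b) | b in nbhd x.2].
  apply/subsetP => -[a b]; rewrite !inE /= /cart_adj /=.
  case/orP=> /andP[xy /eqP <-]; apply/orP; [left | right]; apply/imsetP.
  - by exists a; rewrite ?inE.
  - by exists b; rewrite ?inE.
apply: leq_trans (subset_leq_card sub) (leq_trans (leq_card_setU _ _) _).
exact: leq_add (leq_imset_card _ _) (leq_imset_card _ _).
Qed.

Lemma card_nbhd_complete n (x : vert (complete_graph n)) : #|nbhd x| = n.-1.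
Proof.
rewrite -[in RHS](card_ord n) -(cardsC1 x).
by apply: eq_card => y; rewrite !inE eq_sym.
Qed.

Local Notation rook m n := (cartesian (complete_graph m) (complete_graph n)).

Lemma common_nbhd_rook m n (x y : vert (rook m n)) :
  x != y -> ~~ adj x y -> 2 <= #|nbhd x :&: nbhd y|.
Proof.
case: x y => [a b] [c d]; rewrite /= /cart_adj /= xpair_eqE.
have [<-|ac] := eqVneq a c; have [<-|bd] := eqVneq b d => //= _ _.
have corners : [set (a, d); (c, b)] \subset
    @nbhd (rook m n) (a, b) :&: @nbhd (rook m n) (c, d).
  apply/subsetP => z; rewrite !inE => /orP[] /eqP -> /=;
    by rewrite /cart_adj /= !eqxx /= !andbT ?orbF ?(eq_sym c) ?(eq_sym d) ac bd.
apply: leq_trans (subset_leq_card corners).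
by rewrite cards2 xpair_eqE (negbTE ac).
Qed.

Theorem corollary1 (q : nat) : 7 <= q ->
  achromatic (cartesian (complete_graph 6) (complete_graph q)) <= 2 * q + 7.
Proof.
move=> q_ge7.
have card_nbhd_le (x : vert (rook 6 q)) : #|nbhd x| <= q + 4.
  by have := card_nbhd_cartesian x; rewrite !card_nbhd_complete; lia.
have card_vert : #|vert (rook 6 q)| = 6 * q.
  by rewrite /= card_prod !card_ord.
have := achromatic_lt card_nbhd_le (@common_nbhd_rook 6 q) ltac:(lia).
rewrite card_vert; lia.
Qed.
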